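(* Let $d,q\geq 2$ be integers. Then: (a) for every $\theta_w,\theta_1,\theta_0\in\mathbb{Z}$, the density $\delta(q,d;0,\theta_w,0,\theta_1,\theta_0)$ exists; (b) if $d\mid q^n$ for some $n\in\mathbb{N}$, then the density $\delta(q,d;\mathbf{s})$ exists for every $\mathbf{s}\in\mathbb{Z}^5$.
   Context: For an integer $q\geq 2$ and $n\in\mathbb{N}$: $v_q(0)=0$ and, for $n>0$, $v_q(n)=\max\{k: q^k\mid n\}$; $w_q(n)=\sum_{i=0}^n v_q(i)$; $u_q(n)=\sum_{i=0}^n w_q(i)$. For $\mathbf{s}=(\theta_u,\theta_w,\theta_2,\theta_1,\theta_0)\in\mathbb{Z}^5$, $\gamma(A,q,d;\mathbf{s})$ is the number of $n\in\mathbb{N}$, $n<A$, with $\theta_u u_q(n)+\theta_w w_q(n)+\theta_2\frac{n(n+1)}{2}+\theta_1 n+\theta_0\equiv 0\pmod d$, and $\delta(q,d;\mathbf{s})=\lim_{N\to\infty}\gamma(N,q,d;\mathbf{s})/N$ (when the limit exists). *)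

From Stdlib Require Import Reals ZArith Arith List Lia.

(* v_q(n): q-adic valuation, with v_q(0) = 0.  Computed with fuel n
   (since q >= 2 and n > 0, at most n divisions are needed). *)
Fixpoint vq_fuel (fuel q n : nat) : nat :=
  match fuel with
  | O => O
  | S f => if Nat.eqb n 0 then O
           else if Nat.eqb (n mod q) 0 then S (vq_fuel f q (n / q)) else O
  end.

Definition vq (q n : nat) : nat := vq_fuel n q n.

Fixpoint wq (q n : nat) : nat :=
  match n with
  | O => vq q 0
  | S m => wq q m + vq q (S m)
  end.

Fixpoint uq (q n : nat) : nat :=
  match n with
  | O => wq q 0
  | S m => uq q m + wq q (S m)
  end.

Record params := mkParams { th_u : Z; th_w : Z; th_2 : Z; th_1 : Z; th_0 : Z }.

Definition poly_val (q : nat) (s : params) (n : nat) : Z :=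
  (th_u s * Z.of_nat (uq q n) + th_w s * Z.of_nat (wq q n)
   + th_2 s * Z.of_nat (n * (n + 1) / 2) + th_1 s * Z.of_nat n + th_0 s)%Z.

Definition satisfies (q d : nat) (s : params) (n : nat) : bool :=
  Z.eqb (Z.modulo (poly_val q s n) (Z.of_nat d)) 0.

Definition gamma (A q d : nat) (s : params) : nat :=
  length (filter (satisfies q d s) (seq 0 A)).

Definition density_exists (q d : nat) (s : params) : Prop :=
  exists L : R, Un_cv (fun N => (INR (gamma N q d s) / INR N)%R) L.

(* Since w_q(q m + b) = m + w_q(m), the residue pair (n mod d, w_q(n) mod d) is computed by
   a finite automaton reading the base-q digits of n, so by pigeonhole every pair is realised
   by some c < B := q^(d^2).  For r < q^K, the residue mod d of the polynomial at x q^K + r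
   depends on x only through this pair: w_q is additive over digit blocks, and u_q and
   n(n+1)/2 are prefix sums whose part below x q^(K+1) is divisible by q^K, hence by d once
   d | q^K (not needed when theta_u = theta_2 = 0).
   For prefixes a, a' pick c ~ a' B and c' ~ a B; then a B + c ~ a' B + c', so any two blocks
   of length B q^K contain sub-blocks of length q^K with identical solution sets.  The spread
   of block counts therefore contracts by (B - 1) / B from one scale to the next, and the
   frequencies converge. *)

From Stdlib Require Import Reals ZArith Arith Lia Lra List Classical.

(* Zdiv proves these morphism instances but declares them only inside its section. *)
#[local] Existing Instances eqm_setoid Zplus_eqm Zmult_eqm.

Fixpoint sum_below (f : nat -> nat) (n : nat) : nat :=
  match n with
  | O => O
  | S n => sum_below f n + f n
  end.

Section SumBelow.
Implicit Types (f g : nat -> nat) (n : nat).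

Lemma sum_below_ext f g n :
  (forall i, i < n -> f i = g i) -> sum_below f n = sum_below g n.
Proof.
  induction n as [|n IH]; intros Hfg; simpl; [reflexivity|].
  rewrite IH by (intros; apply Hfg; lia).
  rewrite (Hfg n) by lia; reflexivity.
Qed.

Lemma sum_below_add f m n :
  sum_below f (m + n) = sum_below f m + sum_below (fun i => f (m + i)) n.
Proof.
  induction n as [|n IH]; simpl; [now rewrite Nat.add_0_r, Nat.add_0_r|].
  rewrite Nat.add_succ_r; simpl; rewrite IH; lia.
Qed.

Lemma sum_below_mul f k L :
  sum_below f (k * L) = sum_below (fun a => sum_below (fun i => f (a * L + i)) L) k.
Proof.
  induction k as [|k IH]; simpl; [reflexivity|].
  rewrite Nat.add_comm, sum_below_add, IH; reflexivity.
Qed.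

Lemma sum_below_plus f g n :
  sum_below (fun i => f i + g i) n = sum_below f n + sum_below g n.
Proof. induction n as [|n IH]; simpl; lia. Qed.

Lemma sum_below_const c n : sum_below (fun _ => c) n = n * c.
Proof. induction n as [|n IH]; simpl; lia. Qed.

Lemma sum_below_scal c f n :
  sum_below (fun i => c * f i) n = c * sum_below f n.
Proof. induction n as [|n IH]; simpl; [lia|]. rewrite IH; ring. Qed.

Lemma sum_below_le_const f c n :
  (forall i, i < n -> f i <= c) -> sum_below f n <= n * c.
Proof.
  induction n as [|n IH]; intros Hf; simpl; [lia|].
  assert (sum_below f n <= n * c) by (apply IH; intros; apply Hf; lia).
  specialize (Hf n (Nat.lt_succ_diag_r n)); lia.
Qed.

Lemma sum_below_ge_const f c n :
  (forall i, i < n -> c <= f i) -> n * c <= sum_below f n.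
Proof.
  induction n as [|n IH]; intros Hf; simpl; [lia|].
  assert (n * c <= sum_below f n) by (apply IH; intros; apply Hf; lia).
  specialize (Hf n (Nat.lt_succ_diag_r n)); lia.
Qed.

Lemma sum_below_pick_le f c n i0 :
  i0 < n -> (forall i, i < n -> f i <= c) -> sum_below f n + c <= f i0 + n * c.
Proof.
  induction n as [|n IH]; intros Hi0 Hf; simpl; [lia|].
  destruct (Nat.eq_dec i0 n) as [->|Hne].
  - assert (sum_below f n <= n * c) by (apply sum_below_le_const; intros; apply Hf; lia).
    lia.
  - assert (sum_below f n + c <= f i0 + n * c) by (apply IH; [lia | intros; apply Hf; lia]).
    specialize (Hf n (Nat.lt_succ_diag_r n)); lia.
Qed.

Lemma sum_below_pick_ge f c n i0 :
  i0 < n -> (forall i, i < n -> c <= f i) -> f i0 + n * c <= sum_below f n + c.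
Proof.
  induction n as [|n IH]; intros Hi0 Hf; simpl; [lia|].
  destruct (Nat.eq_dec i0 n) as [->|Hne].
  - assert (n * c <= sum_below f n) by (apply sum_below_ge_const; intros; apply Hf; lia).
    lia.
  - assert (f i0 + n * c <= sum_below f n + c) by (apply IH; [lia | intros; apply Hf; lia]).
    specialize (Hf n (Nat.lt_succ_diag_r n)); lia.
Qed.

(* Both sums are compared with n copies of U = max x: the matched pair costs nothing and
   each of the other n - 1 terms of y is at least U - D. *)
Lemma sum_below_spread x y n D i0 j0 :
  i0 < n -> j0 < n -> x i0 = y j0 ->
  (forall i j, i < n -> j < n -> x i <= y j + D) ->
  sum_below x n <= sum_below y n + (n - 1) * D.
Proof.
  intros Hi0 Hj0 Hxy HD.
  set (U := list_max (map x (seq 0 n))).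
  assert (HxU : forall i, i < n -> x i <= U).
  { intros i Hi. pose proof (proj1 (list_max_le _ U) (le_n U)) as HU.
    rewrite Forall_forall in HU. apply HU, in_map, in_seq; lia. }
  assert (HUy : forall j, j < n -> U <= y j + D).
  { intros j Hj. apply list_max_le, Forall_forall. intros v Hv.
    apply in_map_iff in Hv as [i [<- Hi]]. apply in_seq in Hi. apply HD; lia. }
  pose proof (sum_below_pick_le x U n i0 Hi0 HxU) as Hx.
  pose proof (sum_below_pick_ge (fun j => y j + D) U n j0 Hj0 HUy) as Hy.
  rewrite sum_below_plus, sum_below_const in Hy.
  destruct n as [|n]; [lia|]. simpl in *. nia.
Qed.

Lemma sum_below_eqm (N : Z) f g n :
  (forall i, i < n -> eqm N (Z.of_nat (f i)) (Z.of_nat (g i))) ->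
  eqm N (Z.of_nat (sum_below f n)) (Z.of_nat (sum_below g n)).
Proof.
  induction n as [|n IH]; intros Hfg; simpl; [reflexivity|].
  pose proof (Hfg n (Nat.lt_succ_diag_r n)) as Hn.
  rewrite !Nat2Z.inj_add, IH, Hn by (intros; apply Hfg; lia).
  reflexivity.
Qed.

End SumBelow.

Section Valuation.
Variable q : nat.
Hypothesis hq : 2 <= q.

Lemma vq_fuel_enough f1 f2 n :
  n <= f1 -> n <= f2 -> vq_fuel f1 q n = vq_fuel f2 q n.
Proof.
  revert f2 n; induction f1 as [|f1 IH]; intros [|f2] n H1 H2; simpl;
    try (replace n with 0 by lia; reflexivity).
  destruct (Nat.eqb_spec n 0) as [|Hn]; [reflexivity|].
  destruct (n mod q =? 0); [|reflexivity].
  assert (n / q < n) by (apply Nat.div_lt; lia).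
  f_equal; apply IH; lia.
Qed.

Lemma vq_mul_q m : 0 < m -> vq q (q * m) = S (vq q m).
Proof.
  intros Hm. unfold vq.
  destruct (q * m) as [|n] eqn:Eqm; [nia|]. simpl.
  rewrite <- Eqm, Nat.mul_comm, Nat.Div0.mod_mul, Nat.div_mul by lia; simpl.
  f_equal; apply vq_fuel_enough; nia.
Qed.

Lemma vq_not_dvd n : n mod q <> 0 -> vq q n = 0.
Proof.
  intros Hn. unfold vq. destruct n as [|n]; [reflexivity|]. simpl.
  apply Nat.eqb_neq in Hn. now rewrite Hn.
Qed.

Lemma div_mod_digit n b : b < q -> (q * n + b) / q = n /\ (q * n + b) mod q = b.
Proof.
  intros Hb. split.
  - symmetry; apply (Nat.div_unique _ _ _ b); lia.
  - symmetry; apply (Nat.mod_unique _ _ n); lia.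
Qed.

(* Legendre: each multiple q k <= n contributes 1 + v_q(k). *)
Lemma wq_div n : wq q n = n / q + wq q (n / q).
Proof.
  induction n as [|n IH]; [now rewrite Nat.Div0.div_0_l|]. simpl. rewrite IH.
  pose proof (Nat.div_mod_eq n q) as En.
  pose proof (Nat.mod_upper_bound n q ltac:(lia)) as Hr.
  set (k := n / q) in *. set (r := n mod q) in *.
  destruct (Nat.eq_dec (S r) q) as [Er|Er].
  - replace (S n) with (q * S k) by lia.
    rewrite vq_mul_q, Nat.mul_comm, Nat.div_mul by lia. simpl; lia.
  - destruct (div_mod_digit k (S r)) as [Ed Em]; [lia|].
    replace (S n) with (q * k + S r) by lia.
    rewrite Ed, vq_not_dvd by lia. lia.
Qed.

Lemma wq_digit n b : b < q -> wq q (q * n + b) = n + wq q n.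
Proof. intros Hb. rewrite wq_div. now rewrite (proj1 (div_mod_digit n b Hb)). Qed.

Lemma wq_mul_pow_add A K r :
  r < q ^ K -> wq q (A * q ^ K + r) = A * wq q (q ^ K) + wq q A + wq q r.
Proof.
  revert r; induction K as [|K IH]; intros r Hr; simpl in Hr.
  - replace r with 0 by lia.
    assert (Hw1 : wq q 1 = 0) by (apply (vq_not_dvd 1); rewrite Nat.mod_small; lia).
    rewrite Nat.pow_0_r, Nat.mul_1_r, Nat.add_0_r, Hw1. change (wq q 0) with 0. lia.
  - pose proof (Nat.div_mod_eq r q) as Er.
    pose proof (Nat.mod_upper_bound r q ltac:(lia)) as Hb.
    assert (Hr1 : r / q < q ^ K) by nia.
    replace (A * q ^ S K + r) with (q * (A * q ^ K + r / q) + r mod q) by (simpl; nia).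
    replace (q ^ S K) with (q * q ^ K + 0) by (simpl; lia).
    rewrite Er at 3.
    rewrite !wq_digit, IH by lia. nia.
Qed.

Lemma wq_mul_pow A K : wq q (A * q ^ K) = A * wq q (q ^ K) + wq q A.
Proof.
  rewrite <- (Nat.add_0_r (A * q ^ K)), wq_mul_pow_add.
  - change (wq q 0) with 0; lia.
  - apply Nat.neq_0_lt_0, Nat.pow_nonzero; lia.
Qed.

Lemma wq_add_low A K r :
  r < q ^ K -> wq q (A * q ^ K + r) = wq q (A * q ^ K) + wq q r.
Proof. intros Hr. rewrite wq_mul_pow_add, wq_mul_pow by assumption; lia. Qed.

End Valuation.

Lemma sum_below_id_mul Y L :
  sum_below (fun i => i) (Y * L)
  = L * L * sum_below (fun i => i) Y + Y * sum_below (fun i => i) L.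
Proof.
  rewrite sum_below_mul.
  rewrite (sum_below_ext _ (fun a => L * L * a + sum_below (fun i => i) L))
    by (intros a _; rewrite (sum_below_plus (fun _ => a * L) (fun i => i)), sum_below_const;
        ring).
  now rewrite sum_below_plus, sum_below_scal, sum_below_const, Nat.mul_comm.
Qed.

Lemma triangular_sum_below n : n * (n + 1) / 2 = sum_below (fun i => i) (S n).
Proof.
  assert (H2 : sum_below (fun i => i) (S n) * 2 = n * (n + 1)).
  { induction n as [|n IH]; [reflexivity|]. simpl in *. nia. }
  rewrite <- H2. apply Nat.div_mul; lia.
Qed.

Section PrefixSums.
Variable q : nat.
Hypothesis hq : 2 <= q.

Lemma uq_sum_below n : uq q n = sum_below (wq q) (S n).
Proof. induction n as [|n IH]; simpl in *; [reflexivity|]. now rewrite IH. Qed.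

Lemma sum_below_wq_mul Y :
  sum_below (wq q) (Y * q) = q * (sum_below (wq q) Y + sum_below (fun i => i) Y).
Proof.
  rewrite sum_below_mul.
  rewrite (sum_below_ext _ (fun a => q * (wq q a + a))).
  - now rewrite sum_below_scal, sum_below_plus.
  - intros a _. rewrite (sum_below_ext _ (fun _ => a + wq q a)), sum_below_const by
      (intros i Hi; rewrite Nat.mul_comm; apply wq_digit; lia).
    lia.
Qed.

Lemma pow_dvd_prefix_sums K A :
  Nat.divide (q ^ K) (sum_below (fun i => i) (A * q ^ S K)) /\
  Nat.divide (q ^ K) (sum_below (wq q) (A * q ^ S K)).
Proof.
  induction K as [|K [IH1 IH2]]; [split; apply Nat.divide_1_l|].
  set (Y := A * q ^ S K) in *.
  replace (A * q ^ S (S K)) with (Y * q) by (unfold Y; simpl; ring).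
  assert (HY : Nat.divide (q ^ S K) Y) by (exists A; reflexivity).
  rewrite sum_below_id_mul, sum_below_wq_mul.
  destruct IH1 as [t Ht], IH2 as [u Hu], HY as [y Hy].
  split.
  - exists (t * q + y * sum_below (fun i => i) q). rewrite Ht, Hy. simpl; ring.
  - exists (u + t). rewrite Ht, Hu. simpl; ring.
Qed.

End PrefixSums.

Lemma pigeonhole {A : Type} (f : nat -> A) (l : list A) :
  (forall i, i <= length l -> In (f i) l) ->
  exists i j, i < j <= length l /\ f i = f j.
Proof.
  intros Hf. apply NNPP. intros Hno.
  assert (Hnodup : NoDup (map f (seq 0 (S (length l))))).
  { apply NoDup_map_NoDup_ForallPairs; [|apply seq_NoDup].
    intros i j Hi Hj Hij. apply in_seq in Hi, Hj.
    destruct (Nat.lt_trichotomy i j) as [Hlt|[Heq|Hgt]]; [| exact Heq |];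
      exfalso; apply Hno; [exists i, j | exists j, i]; repeat split; auto; lia. }
  assert (Hincl : incl (map f (seq 0 (S (length l)))) l).
  { intros v Hv. apply in_map_iff in Hv as [i [<- Hi]]. apply in_seq in Hi. apply Hf; lia. }
  pose proof (NoDup_incl_length Hnodup Hincl) as Hlen.
  rewrite length_map, length_seq in Hlen. lia.
Qed.

Definition wq_class_eq (q d x y : nat) : Prop :=
  eqm (Z.of_nat d) (Z.of_nat x) (Z.of_nat y) /\
  eqm (Z.of_nat d) (Z.of_nat (wq q x)) (Z.of_nat (wq q y)).

Section Congruence.
Variables q d : nat.
Hypothesis hq : 2 <= q.
Hypothesis hd : 2 <= d.

Local Notation "a ≡ b" := (eqm (Z.of_nat d) a b) (at level 70).

Lemma eqm_of_mod_eq a b : a mod d = b mod d -> Z.of_nat a ≡ Z.of_nat b.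
Proof. intros H. unfold eqm. rewrite <- !Nat2Z.inj_mod. now f_equal. Qed.

Lemma eqm_0_of_divide a : Nat.divide d a -> Z.of_nat a ≡ 0%Z.
Proof.
  intros [k ->]. unfold eqm. rewrite Nat2Z.inj_mul, Z_mod_mult. reflexivity.
Qed.

Lemma wq_class_eq_trans x y z :
  wq_class_eq q d x y -> wq_class_eq q d y z -> wq_class_eq q d x z.
Proof. intros [H1 H2] [H3 H4]. split; etransitivity; eassumption. Qed.

Lemma wq_class_eq_append x y K r :
  wq_class_eq q d x y -> r < q ^ K ->
  wq_class_eq q d (x * q ^ K + r) (y * q ^ K + r).
Proof.
  intros [Hx Hw] Hr. split.
  - rewrite !Nat2Z.inj_add, !Nat2Z.inj_mul, Hx. reflexivity.
  - rewrite !wq_mul_pow_add by assumption.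
    rewrite !Nat2Z.inj_add, !Nat2Z.inj_mul, Hx, Hw. reflexivity.
Qed.

Lemma wq_class_eq_swap a b c c' J :
  c < q ^ J -> c' < q ^ J ->
  wq_class_eq q d c (b * q ^ J) -> wq_class_eq q d c' (a * q ^ J) ->
  wq_class_eq q d (a * q ^ J + c) (b * q ^ J + c').
Proof.
  intros Hc Hc' [Hc1 Hc2] [Hc'1 Hc'2]. split.
  - rewrite !Nat2Z.inj_add, Hc1, Hc'1, Z.add_comm. reflexivity.
  - rewrite !wq_add_low by assumption.
    rewrite !Nat2Z.inj_add, Hc2, Hc'2, Z.add_comm. reflexivity.
Qed.

Lemma wq_class_eq_of_residues x y :
  (x mod d, wq q x mod d) = (y mod d, wq q y mod d) -> wq_class_eq q d x y.
Proof. intros Hxy. injection Hxy as Hx Hw. split; now apply eqm_of_mod_eq. Qed.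

(* Pigeonhole on the d^2 residue pairs of the truncations n / q^s, s <= d^2: cutting out
   the digits between two truncations with equal residues keeps the class of n. *)
Lemma exists_shorter_rep n :
  q ^ (d * d) <= n -> exists n', n' < n /\ wq_class_eq q d n' n.
Proof.
  intros Hn.
  destruct (pigeonhole (fun s => (n / q ^ s mod d, wq q (n / q ^ s) mod d))
              (list_prod (seq 0 d) (seq 0 d))) as (s1 & s2 & [Hs12 Hs2] & Hres).
  { intros s _. apply in_prod; apply in_seq; split; try apply Nat.mod_upper_bound; lia. }
  rewrite length_prod, length_seq in Hs2.
  assert (Hpos : forall k, 0 < q ^ k) by (intros; apply Nat.neq_0_lt_0, Nat.pow_nonzero; lia).
  set (p1 := n / q ^ s1) in *. set (r1 := n mod q ^ s1).
  assert (En : n = p1 * q ^ s1 + r1) by (rewrite Nat.mul_comm; apply Nat.div_mod_eq).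
  assert (Ep2 : n / q ^ s2 = p1 / q ^ (s2 - s1)).
  { unfold p1. rewrite Nat.Div0.div_div, <- Nat.pow_add_r. do 2 f_equal; lia. }
  assert (Hp2 : p1 / q ^ (s2 - s1) < p1).
  { apply Nat.div_lt; [apply Nat.div_str_pos | apply Nat.pow_gt_1]; try lia.
    split; [apply Hpos|].
    apply (Nat.le_trans _ (q ^ (d * d))); [apply Nat.pow_le_mono_r|]; lia. }
  exists (n / q ^ s2 * q ^ s1 + r1). split.
  - rewrite Ep2, En at 1. specialize (Hpos s1). nia.
  - rewrite En at 2. apply wq_class_eq_append.
    + apply wq_class_eq_of_residues. now symmetry.
    + apply Nat.mod_upper_bound. specialize (Hpos s1); lia.
Qed.

Lemma exists_small_rep n : exists c, c < q ^ (d * d) /\ wq_class_eq q d c n.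
Proof.
  induction n as [n IH] using lt_wf_ind.
  destruct (Nat.lt_ge_cases n (q ^ (d * d))) as [Hn|Hn].
  - exists n. split; [assumption | split; reflexivity].
  - destruct (exists_shorter_rep n Hn) as (n' & Hn' & Hcl).
    destruct (IH n' Hn') as (c & Hc & Hccl).
    exists c. split; [assumption|]. exact (wq_class_eq_trans _ _ _ Hccl Hcl).
Qed.

Lemma exists_coupled_digits a b :
  exists c c', c < q ^ (d * d) /\ c' < q ^ (d * d) /\
    wq_class_eq q d (a * q ^ (d * d) + c) (b * q ^ (d * d) + c').
Proof.
  destruct (exists_small_rep (b * q ^ (d * d))) as (c & Hc & Hccl).
  destruct (exists_small_rep (a * q ^ (d * d))) as (c' & Hc' & Hc'cl).
  exists c, c'. repeat split; try assumption; now apply wq_class_eq_swap.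
Qed.

Lemma sum_below_append_eqm f Q x y r :
  r < Q ->
  (forall i, i < Q -> Z.of_nat (f (x * Q + i)) ≡ Z.of_nat (f (y * Q + i))) ->
  Nat.divide d (sum_below f (x * Q)) -> Nat.divide d (sum_below f (y * Q)) ->
  Z.of_nat (sum_below f (x * Q + S r)) ≡ Z.of_nat (sum_below f (y * Q + S r)).
Proof.
  intros Hr Hf Hx Hy.
  assert (Hlow : Z.of_nat (sum_below (fun i => f (x * Q + i)) (S r))
                 ≡ Z.of_nat (sum_below (fun i => f (y * Q + i)) (S r)))
    by (apply sum_below_eqm; intros; apply Hf; lia).
  rewrite !sum_below_add, !Nat2Z.inj_add, (eqm_0_of_divide _ Hx), (eqm_0_of_divide _ Hy), Hlow.
  reflexivity.
Qed.

Lemma satisfies_eqm s n n' :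
  Z.of_nat n ≡ Z.of_nat n' -> Z.of_nat (wq q n) ≡ Z.of_nat (wq q n') ->
  (th_u s = 0%Z \/ Z.of_nat (uq q n) ≡ Z.of_nat (uq q n')) ->
  (th_2 s = 0%Z \/ Z.of_nat (n * (n + 1) / 2) ≡ Z.of_nat (n' * (n' + 1) / 2)) ->
  satisfies q d s n = satisfies q d s n'.
Proof.
  intros Hn Hw Hu H2.
  assert (E : poly_val q s n ≡ poly_val q s n').
  { unfold poly_val. rewrite Hn, Hw.
    destruct Hu as [Hu|Hu], H2 as [H2|H2]; rewrite Hu, H2, ?Z.mul_0_l; reflexivity. }
  unfold eqm in E. unfold satisfies. now rewrite E.
Qed.

Lemma satisfies_append s K x y r :
  (th_u s = 0%Z /\ th_2 s = 0%Z) \/ Nat.divide d (q ^ K) ->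
  wq_class_eq q d x y -> r < q ^ S K ->
  satisfies q d s (x * q ^ S K + r) = satisfies q d s (y * q ^ S K + r).
Proof.
  intros Hcase Hxy Hr.
  destruct (wq_class_eq_append _ _ _ _ Hxy Hr) as [Hn Hw].
  apply satisfies_eqm; [exact Hn | exact Hw | |];
    destruct Hcase as [[Hu H2] | Hdiv]; try (now left); right.
  - rewrite !uq_sum_below, <- !Nat.add_succ_r.
    apply sum_below_append_eqm; [exact Hr | | |].
    + intros i Hi. exact (proj2 (wq_class_eq_append _ _ _ _ Hxy Hi)).
    + exact (Nat.divide_trans _ _ _ Hdiv (proj2 (pow_dvd_prefix_sums q hq K x))).
    + exact (Nat.divide_trans _ _ _ Hdiv (proj2 (pow_dvd_prefix_sums q hq K y))).
  - rewrite !triangular_sum_below, <- !Nat.add_succ_r.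
    apply sum_below_append_eqm; [exact Hr | | |].
    + intros i Hi. exact (proj1 (wq_class_eq_append _ _ _ _ Hxy Hi)).
    + exact (Nat.divide_trans _ _ _ Hdiv (proj1 (pow_dvd_prefix_sums q hq K x))).
    + exact (Nat.divide_trans _ _ _ Hdiv (proj1 (pow_dvd_prefix_sums q hq K y))).
Qed.

End Congruence.

Section RatioBound.
Local Open Scope R_scope.

(* [bulk] counts Q blocks of length L, each within D of [c0]; [tail] counts a remainder
   of length r. *)
Lemma Rabs_ratio_error_le Q r L D c0 bulk tail :
  0 < L -> 0 <= D -> 0 <= c0 <= L -> 0 <= tail <= r -> r <= L ->
  0 < Q * L + r -> bulk <= Q * (c0 + D) -> Q * c0 <= bulk + Q * D ->
  Rabs ((bulk + tail) / (Q * L + r) - c0 / L) <= D / L + L / (Q * L + r).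
Proof.
  intros HL HD Hc0 Htail HrL HN Hbulk1 Hbulk2.
  set (N := Q * L + r) in *.
  assert (Hkey : Rabs (L * (bulk + tail) - c0 * N) <= D * N + L * L).
  { assert (L * bulk <= L * (Q * (c0 + D))) by (apply Rmult_le_compat_l; lra).
    assert (L * (Q * c0) <= L * (bulk + Q * D)) by (apply Rmult_le_compat_l; lra).
    assert (L * tail <= L * L) by (apply Rmult_le_compat_l; lra).
    assert (c0 * r <= L * L) by (apply Rmult_le_compat; lra).
    assert (0 <= D * r) by (apply Rmult_le_pos; lra).
    assert (0 <= c0 * r) by (apply Rmult_le_pos; lra).
    assert (0 <= L * tail) by (apply Rmult_le_pos; lra).
    apply Rabs_le. unfold N. split; lra. }
  replace ((bulk + tail) / N - c0 / L) with
    ((L * (bulk + tail) - c0 * N) * / (N * L)) by (field; lra).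
  replace (D / L + L / N) with ((D * N + L * L) * / (N * L)) by (field; lra).
  assert (Hinv : 0 < / (N * L)) by (apply Rinv_0_lt_compat; nra).
  rewrite Rabs_mult, (Rabs_right (/ _)) by lra.
  apply Rmult_le_compat_r; lra.
Qed.

End RatioBound.

Section Density.
Variable P : nat -> bool.

Definition count (N : nat) : nat := length (filter P (seq 0 N)).

Definition block_count (L a : nat) : nat :=
  sum_below (fun i => Nat.b2n (P (a * L + i))) L.

Definition blocks_couple (L B : nat) : Prop :=
  forall a a', exists c c', c < B /\ c' < B /\
    block_count L (a * B + c) = block_count L (a' * B + c').

Lemma count_sum_below N : count N = sum_below (fun i => Nat.b2n (P i)) N.
Proof.
  unfold count. induction N as [|N IH]; [reflexivity|].
  rewrite seq_S, filter_app, length_app, IH. simpl. destruct (P N); simpl; lia.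
Qed.

Lemma sum_below_b2n_le f n : sum_below (fun i => Nat.b2n (f i)) n <= n.
Proof.
  rewrite <- (Nat.mul_1_r n) at 2. apply sum_below_le_const.
  intros i _. destruct (f i); simpl; lia.
Qed.

Lemma count_split Q L R :
  count (Q * L + R)
  = sum_below (block_count L) Q + sum_below (fun i => Nat.b2n (P (Q * L + i))) R.
Proof. now rewrite count_sum_below, sum_below_add, sum_below_mul. Qed.

Lemma block_count_mul B L a :
  block_count (B * L) a = sum_below (fun c => block_count L (a * B + c)) B.
Proof.
  unfold block_count. rewrite sum_below_mul.
  apply sum_below_ext; intros c _. apply sum_below_ext; intros i _.
  do 2 f_equal. ring.
Qed.

Lemma block_count_oscillation L0 B :
  (forall n, blocks_couple (L0 * B ^ n) B) ->
  forall n a a', block_count (L0 * B ^ n) a <= block_count (L0 * B ^ n) a' + (B - 1) ^ n * L0.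
Proof.
  intros Hcouple n. induction n as [|n IH]; intros a a'.
  - rewrite !Nat.pow_0_r, Nat.mul_1_r, Nat.mul_1_l.
    pose proof (sum_below_b2n_le (fun i => P (a * L0 + i)) L0). unfold block_count. lia.
  - replace (L0 * B ^ S n) with (B * (L0 * B ^ n)) by (rewrite Nat.pow_succ_r'; ring).
    rewrite !block_count_mul, Nat.pow_succ_r', <- Nat.mul_assoc.
    destruct (Hcouple n a a') as (c & c' & Hc & Hc' & Hcc).
    apply sum_below_spread with c c'; auto.
Qed.

Local Open Scope R_scope.

Lemma count_ratio_approx L D N :
  (0 < L)%nat -> (0 < N)%nat -> (forall a a', block_count L a <= block_count L a' + D)%nat ->
  Rabs (INR (count N) / INR N - INR (block_count L 0) / INR L)
  <= INR D / INR L + INR L / INR N.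
Proof.
  intros HL HN Hosc.
  pose proof (Nat.div_mod_eq N L) as EN.
  pose proof (Nat.mod_upper_bound N L ltac:(lia)) as Hr.
  set (Q := (N / L)%nat) in *. set (r := (N mod L)%nat) in *. set (c0 := block_count L 0).
  set (bulk := sum_below (block_count L) Q).
  set (tail := sum_below (fun i => Nat.b2n (P (Q * L + i)%nat)) r).
  assert (EC : count N = (bulk + tail)%nat)
    by (replace N with (Q * L + r)%nat by lia; apply count_split).
  assert (Htail : (tail <= r)%nat) by apply sum_below_b2n_le.
  assert (Hc0 : (c0 <= L)%nat) by apply sum_below_b2n_le.
  assert (Hbulk1 : (bulk <= Q * (c0 + D))%nat)
    by (apply sum_below_le_const; intros; apply Hosc).
  assert (Hbulk2 : (Q * c0 <= bulk + Q * D)%nat).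
  { pose proof (sum_below_ge_const (fun a => block_count L a + D)%nat c0 Q) as Hge.
    rewrite sum_below_plus, sum_below_const in Hge. apply Hge; intros; apply Hosc. }
  assert (HrL : (r <= L)%nat) by lia.
  replace (INR N) with (INR Q * INR L + INR r)
    by (rewrite <- mult_INR, <- plus_INR; f_equal; lia).
  rewrite EC, plus_INR.
  apply le_INR in Htail, Hc0, Hbulk1, Hbulk2, HrL.
  rewrite mult_INR, plus_INR in Hbulk1. rewrite plus_INR, !mult_INR in Hbulk2.
  assert (0 < INR L) by (apply lt_0_INR; lia).
  assert (0 < INR Q * INR L + INR r)
    by (rewrite <- mult_INR, <- plus_INR; apply lt_0_INR; lia).
  pose proof (pos_INR c0). pose proof (pos_INR tail).
  apply Rabs_ratio_error_le; try apply pos_INR; lra.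
Qed.

End Density.

Section Convergence.
Local Open Scope R_scope.

Lemma Un_cv_of_approx (u : nat -> R) :
  (forall eps, 0 < eps -> exists beta N0, forall N, (N0 <= N)%nat -> Rabs (u N - beta) < eps) ->
  exists l, Un_cv u l.
Proof.
  intros Happrox. destruct (R_complete u) as [l Hl]; [|now exists l].
  intros eps Heps. destruct (Happrox (eps / 2)) as (beta & N0 & HN0); [lra|].
  exists N0. intros n m Hn Hm. unfold R_dist.
  destruct (Rabs_def2 _ _ (HN0 n Hn)), (Rabs_def2 _ _ (HN0 m Hm)).
  apply Rabs_def1; lra.
Qed.

Lemma Un_cv_of_geometric_approx (u : nat -> R) (rho : R) (L : nat -> R) :
  0 <= rho < 1 ->
  (forall n, exists beta, forall N, (0 < N)%nat -> Rabs (u N - beta) <= rho ^ n + L n / INR N) ->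
  exists l, Un_cv u l.
Proof.
  intros Hrho Happrox. apply Un_cv_of_approx. intros eps Heps.
  destruct (pow_lt_1_zero rho ltac:(rewrite Rabs_right; lra) (eps / 2)) as [n Hn]; [lra|].
  specialize (Hn n (le_n n)). pose proof (RRle_abs (rho ^ n)).
  destruct (Happrox n) as [beta Hbeta].
  destruct (INR_unbounded (2 * L n / eps)) as [N0 HN0].
  exists beta, (S N0). intros N HN.
  assert (HN0N : INR N0 < INR N) by (apply lt_INR; lia).
  pose proof (pos_INR N0).
  assert (HLN : L n / INR N < eps / 2).
  { apply (Rmult_lt_reg_r (INR N)); [lra|].
    unfold Rdiv at 1. rewrite Rmult_assoc, Rinv_l, Rmult_1_r by lra.
    replace (L n) with (eps / 2 * (2 * L n / eps)) at 1 by (field; lra).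
    apply Rmult_lt_compat_l; lra. }
  specialize (Hbeta N ltac:(lia)). lra.
Qed.

Theorem density_of_coupling (P : nat -> bool) L0 B :
  (0 < L0)%nat -> (0 < B)%nat -> (forall n, blocks_couple P (L0 * B ^ n) B) ->
  exists l, Un_cv (fun N => INR (count P N) / INR N) l.
Proof.
  intros HL0 HB Hcouple.
  assert (HBr : 0 < INR B) by (apply lt_0_INR; lia).
  apply (Un_cv_of_geometric_approx _ (INR (B - 1) / INR B) (fun n => INR (L0 * B ^ n))).
  - split; [apply Rmult_le_pos; [apply pos_INR | left; apply Rinv_0_lt_compat; lra]|].
    unfold Rdiv. rewrite <- (Rinv_r (INR B)) by lra.
    apply Rmult_lt_compat_r; [apply Rinv_0_lt_compat; lra | apply lt_INR; lia].
  - intros n. set (L := (L0 * B ^ n)%nat).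
    assert (HL : (0 < L)%nat)
      by (apply Nat.mul_pos_pos; [|apply Nat.neq_0_lt_0, Nat.pow_nonzero]; lia).
    exists (INR (block_count P L 0) / INR L). intros N HN.
    replace ((INR (B - 1) / INR B) ^ n) with (INR ((B - 1) ^ n * L0) / INR L).
    + apply count_ratio_approx; [exact HL | exact HN |].
      apply block_count_oscillation; exact Hcouple.
    + unfold L, Rdiv. rewrite !mult_INR, !pow_INR, Rpow_mult_distr, pow_inv.
      field. split; [apply pow_nonzero|]; apply not_0_INR; lia.
Qed.

End Convergence.

Lemma blocks_couple_satisfies q d s m :
  2 <= q -> 2 <= d ->
  (th_u s = 0%Z /\ th_2 s = 0%Z) \/ Nat.divide d (q ^ m) ->
  forall n, blocks_couple (satisfies q d s) (q ^ S m * (q ^ (d * d)) ^ n) (q ^ (d * d)).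
Proof.
  intros hq hd Hcase n a a'.
  destruct (exists_coupled_digits q d hq hd a a') as (c & c' & Hc & Hc' & Hcl).
  exists c, c'. repeat split; try assumption.
  replace (q ^ S m * (q ^ (d * d)) ^ n) with (q ^ S (m + d * d * n))
    by (rewrite <- Nat.pow_mul_r, <- Nat.pow_add_r; f_equal; lia).
  unfold block_count. apply sum_below_ext. intros r Hr. f_equal.
  apply satisfies_append; try assumption.
  destruct Hcase as [Hlin | Hdiv]; [now left | right].
  apply (Nat.divide_trans _ (q ^ m)); [assumption|].
  exists (q ^ (d * d * n)). rewrite <- Nat.pow_add_r. f_equal; lia.
Qed.

Theorem theorem3p1 (q d : nat) (hq : (2 <= q)%nat) (hd : (2 <= d)%nat) :
  (forall tw t1 t0 : Z, density_exists q d (mkParams 0 tw 0 t1 t0)) /\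
  ((exists n : nat, Nat.divide d (q ^ n)) ->
     forall s : params, density_exists q d s).
Proof.
  assert (Hdens : forall s m, (th_u s = 0%Z /\ th_2 s = 0%Z) \/ Nat.divide d (q ^ m) ->
                              density_exists q d s).
  { intros s m Hcase. apply (density_of_coupling _ (q ^ S m) (q ^ (d * d))).
    - apply Nat.neq_0_lt_0, Nat.pow_nonzero; lia.
    - apply Nat.neq_0_lt_0, Nat.pow_nonzero; lia.
    - now apply blocks_couple_satisfies. }
  split.
  - intros tw t1 t0. apply (Hdens _ 0). now left.
  - intros [m Hm] s. now apply (Hdens _ m); right.
Qed.
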